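(* Consider the semi-discrete Hermite–DG Vlasov–Maxwell system $\frac{dy}{dt}=\mathcal{F}^N(y)$ on $\mathbb{R}^M$ described in the context, obtained with upwind numerical fluxes in the DG discretization of Maxwell's equations, with initial condition $y(0)$. Let $\{y^\tau\}_{\tau=1,\dots,T/\Delta t}$ be the sequence of approximate solutions produced by the ${N_{GL}}$-stage Gauss–Legendre method with step $\Delta t$ and $y^0=y(0)$, with stages $\mathcal{Y}_i$ and weights $b_i$. Then for every $\tau$, $$\mathcal{E}_{\mathbf{tot}}(y^{\tau+1})-\mathcal{E}_{\mathbf{tot}}(y^\tau)+\Delta t\sum_{i=1}^{{N_{GL}}}b_i\,\mathcal{E}_{\mathbf{bnd}}(\mathcal{Y}_i)\le 0.$$
   Context: Setting: the Vlasov–Maxwell system for $N_s$ plasma species with masses $m^s$, charges $q^s$, on a spatial domain $\Omega_x\subset\mathbb{R}^3$ partitioned into a uniform mesh of hexahedral cells $I$ with faces $\mathsf{f}$, and velocity space $\mathbb{R}^3$. In the Hermite–DG semi-discretization each distribution function is approximated as $f^{s,N}(x,v,t)=\sum_{n,m,p}\sum_{I,l}C^{s,I,l}_{n,m,p}(t)\Psi_{n,m,p}(\xi^s)\varphi^{I,l}(x)$ (asymmetrically weighted Hermite functions in velocity, piecewise polynomials of degree $\le N_{DG}$ on each cell in space) and the electromagnetic fields as piecewise polynomials $E^N(x,t)=\sum_{I,l}E^{I,l}(t)\varphi^{I,l}(x)$, $B^N(x,t)=\sum_{I,l}B^{I,l}(t)\varphi^{I,l}(x)$; the Vlasov equation uses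 upwind fluxes. The vector $y(t)\in\mathbb{R}^M$ of all coefficients $C^{s,I,l}_{n,m,p},E^{I,l},B^{I,l}$ satisfies an autonomous ODE $dy/dt=\mathcal{F}^N(y)$. Energies: $\mathcal{E}_{\mathbf{kin}}(y)=\frac12\sum_s m^s\sum_I\int_I\int_{\mathbb{R}^3}|v|^2f^{s,N}\,dv\,dx$ (linear in $y$); $\mathcal{E}_{E,B}(y)=\frac12(\omega_{ce}/\omega_{pe})^2\sum_I\int_I(|E^N|^2+|B^N|^2)\,dx$ (a quadratic form $y^\top Sy$ with $S$ symmetric); total energy $\mathcal{E}_{\mathbf{tot}}=\mathcal{E}_{\mathbf{kin}}+\mathcal{E}_{E,B}$; boundary energy flux $\mathcal{E}_{\mathbf{bnd}}(y)=\frac12\sum_s m^s\int_{\partial\Omega_x}\int_{\mathbb{R}^3}(n\cdot v)|v|^2f^{s,N}\,dv\,dS$ with $n$ the outward unit normal; jump term $\mathcal{E}_{\mathbf{jump}}(y)=(\omega_{ce}/\omega_{pe})^2\sum_{\mathsf{f}}\frac12\int_{\mathsf{f}}[\![U]\!]_{\mathsf{f}}^\top|\mathbb{F}|[\![U]\!]_{\mathsf{f}}\,dS\ge0$ for upwind Maxwell fluxes, where $U=(E^N,B^N)$, $[\![U]\!]_{\mathsf{f}}$ is its jump across face $\mathsf{f}$ and $|\mathbb{F}|$ is the fixed symmetric positive semidefinite matrix given by the sum of the absolute values of the Maxwell flux matrices. The semi-discrete system satisfies the energy law: along every solution, $\frac{d}{dt}\mathcal{E}_{\mathbf{tot}}(y(t))+\mathcal{E}_{\mathbf{bnd}}(y(t))=-\mathcal{E}_{\mathbf{jump}}(y(t))\le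 0$, for every $y(t)\in\mathbb{R}^M$. The ${N_{GL}}$-stage Gauss–Legendre method is the implicit Runge–Kutta method $\mathcal{Y}_i=y^\tau+\Delta t\sum_{j=1}^{{N_{GL}}}a_{ij}\mathcal{F}^N(\mathcal{Y}_j)$, $y^{\tau+1}=y^\tau+\Delta t\sum_i b_i\mathcal{F}^N(\mathcal{Y}_i)$, with $c_i$ the Gauss–Legendre nodes on $[0,1]$, $q_i(\sigma)=\prod_{j\neq i}(\sigma-c_j)$, $a_{ij}=\int_0^{c_i}q_j/q_j(c_j)$, $b_i=\int_0^1 q_i/q_i(c_i)$. *)

From HB Require Import structures.
From mathcomp Require Import all_boot all_order all_algebra.
From mathcomp Require Import reals.
Set Implicit Arguments. Unset Strict Implicit. Unset Printing Implicit Defensive.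
Import Order.TTheory GRing.Theory Num.Theory.
Local Open Scope ring_scope.

Section GL.
Variable R : realType.

(* Shifted Legendre polynomial of degree s on [0,1] (Rodrigues formula, up to
   a nonzero constant factor): d^s/dx^s [ x^s (x-1)^s ]. *)
Definition shLeg (s : nat) : {poly R} := ('X ^+ s * ('X - 1) ^+ s)^`(s).

(* c_1,...,c_s are the Gauss-Legendre nodes on [0,1]: s distinct roots of the
   degree-s shifted Legendre polynomial (hence all of its roots). *)
Definition GL_nodes (s : nat) (c : 'I_s -> R) : Prop :=
  injective c /\ forall i, root (shLeg s) (c i).

Definition lagq (s : nat) (c : 'I_s -> R) (j : 'I_s) : {poly R} :=
  \prod_(k < s | k != j) ('X - (c k)%:P).

Definition polyint (p : {poly R}) : {poly R} :=
  \poly_(i < (size p).+1) (if i is k.+1 then p`_k / k.+1%:R else 0).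

Definition GL_a (s : nat) (c : 'I_s -> R) (i j : 'I_s) : R :=
  (polyint (lagq c j)).[c i] / (lagq c j).[c j].
Definition GL_b (s : nat) (c : 'I_s -> R) (i : 'I_s) : R :=
  (polyint (lagq c i)).[1] / (lagq c i).[c i].

End GL.

Section Energy.
Variables (R : realType) (M : nat).
Definition Ekin (l : 'cV[R]_M) (y : 'cV[R]_M) : R := (l^T *m y) 0 0.
Definition EEB (S : 'M[R]_M) (y : 'cV[R]_M) : R := (y^T *m S *m y) 0 0.
Definition Etot (l : 'cV[R]_M) (S : 'M[R]_M) (y : 'cV[R]_M) : R :=
  Ekin l y + EEB S y.
(* Directional derivative of E_tot at y in direction v (written out):
   d/dt E_tot(y(t)) = dEtot l S y (dy/dt). *)
Definition dEtot (l : 'cV[R]_M) (S : 'M[R]_M) (y v : 'cV[R]_M) : R :=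
  (l^T *m v) 0 0 + (v^T *m S *m y) 0 0 + (y^T *m S *m v) 0 0.
End Energy.

(* Gauss-Legendre quadrature with s nodes is exact on polynomials of degree
   < 2s: the nodes are the roots of the shifted Legendre polynomial, which is
   orthogonal on [0,1] to every polynomial of lower degree.  With l_k the
   Lagrange basis at the nodes and A_k its antiderivative vanishing at 0 (so
   a_ik = A_k(c_i) and b_k = A_k(1)), exactness applied to l_k^2 and to
   (A_i A_j)' gives b_k >= 0 and b_i a_ij + b_j a_ji = b_i b_j.  As for
   quadratic invariants (Cooper), the latter identity makes the Runge-Kutta
   step exact on the linear-plus-quadratic total energy:
   E(y1) - E(y0) = dt * sum_i b_i dE(Y_i)[F(Y_i)].  The semi-discrete energy
   law and b_i >= 0 then bound the right-hand side by
   - dt * sum_i b_i E_bnd(Y_i). *)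

From HB Require Import structures.
From mathcomp Require Import all_boot all_order all_algebra.
From mathcomp Require Import reals polyrcf polyorder.
From mathcomp Require Import ring zify.
Import GRing.Theory Num.Theory.
Local Open Scope ring_scope.
Set Implicit Arguments. Unset Strict Implicit. Unset Printing Implicit Defensive.

Lemma sumr_delta (T : nzRingType) (I : finType) (f : I -> T) i :
  \sum_k f k * (k == i)%:R = f i.
Proof.
rewrite (bigD1 i) //= eqxx mulr1 big1 ?addr0 // => k /negPf->.
by rewrite mulr0.
Qed.

Section PolyIntegral.
Variable R : realType.
Implicit Types p q P : {poly R}.

Lemma polyint_deriv p : (polyint p)^`() = p.
Proof.
apply/polyP => i; rewrite coef_deriv coef_poly ltnS.
case: ltnP => [_ | /leq_sizeP-> //]; last by rewrite mul0rn.
by rewrite -[LHS]mulr_natr divfK ?pnatr_eq0.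
Qed.

Lemma horner0_polyint p : (polyint p).[0] = 0.
Proof. by rewrite horner_coef0 coef_poly. Qed.

Lemma size_polyint p : (size (polyint p) <= (size p).+1)%N.
Proof. exact: size_poly. Qed.

Lemma polyint_unique P p : P^`() = p -> P = polyint p + (P.[0])%:P.
Proof.
move=> dP; have : (size (P - polyint p)%R <= 1)%N.
  have := size_deriv (P - polyint p).
  by rewrite derivB polyint_deriv dP subrr size_poly0; case: size => [|[]].
move=> /size1_polyC eP; rewrite -horner_coef0 hornerD hornerN horner0_polyint in eP.
by rewrite subr0 in eP; rewrite -eP addrC subrK.
Qed.

Lemma polyint_is_linear : linear (@polyint R).
Proof.
move=> a p q; apply/esym; rewrite [LHS](@polyint_unique _ (a *: p + q)).
  by rewrite hornerD hornerZ !horner0_polyint mulr0 addr0 addr0.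
by rewrite derivD derivZ !polyint_deriv.
Qed.

HB.instance Definition _ :=
  GRing.isLinear.Build R {poly R} {poly R} _ (@polyint R) polyint_is_linear.

Definition integral01 p : R := (polyint p).[1].

Lemma integral01_is_linear : linear_for *%R integral01.
Proof. by move=> a p q; rewrite /integral01 linearP hornerD hornerZ. Qed.

HB.instance Definition _ :=
  GRing.isLinear.Build R {poly R} R *%R integral01 integral01_is_linear.

Lemma integral01_deriv P : integral01 P^`() = P.[1] - P.[0].
Proof.
rewrite {2 3}(polyint_unique (erefl P^`())) /integral01 !hornerD !hornerC.
by rewrite horner0_polyint add0r addrK.
Qed.

Lemma integral01_by_parts p q :
  integral01 (p^`() * q) = (p * q).[1] - (p * q).[0] - integral01 (p * q^`()).
Proof. by rewrite -integral01_deriv derivM linearD addrK. Qed.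

Lemma integral01_ge0 p : (forall x, 0 <= p.[x]) -> 0 <= integral01 p.
Proof.
move=> p_ge0; have [x _] := poly_mvt (polyint p) (@ltr01 R).
by rewrite horner0_polyint subr0 polyint_deriv subr0 mulr1 /integral01 => ->.
Qed.

End PolyIntegral.

Lemma derivn_exp_XsubC_mul (R : comNzRingType) (a : R) n m r : (m <= n)%N ->
  exists r', (('X - a%:P) ^+ n * r)^`(m) = ('X - a%:P) ^+ (n - m) * r'.
Proof.
elim: m => [|m IHm] lt_mn; first by exists r; rewrite derivn0 subn0.
have [r' e] := IHm (ltnW lt_mn); rewrite derivnS e.
have -> : (n - m = (n - m.+1).+1)%N by lia.
set k := (n - m.+1)%N; exists (r' *+ k.+1 + ('X - a%:P) * r'^`()).
by rewrite derivM deriv_exp derivXsubC /= exprS; ring.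
Qed.

Section ShiftedLegendre.
Variable R : realType.
Implicit Types (p Q : {poly R}) (s : nat).

Definition rodrigues s : {poly R} := 'X ^+ s * ('X - 1) ^+ s.

Lemma size_rodrigues s : size (rodrigues s) = (2 * s).+1.
Proof.
rewrite size_mul ?size_polyXn -?polyC1 ?size_exp_XsubC; first lia.
  by rewrite -size_poly_eq0 size_polyXn.
by rewrite -size_poly_eq0 size_exp_XsubC.
Qed.

Lemma size_derivn p n : size p^`(n) = (size p - n)%N.
Proof. by elim: n => [|n IHn]; rewrite ?subn0 // derivnS size_deriv IHn subnS. Qed.

Lemma size_shLeg s : size (shLeg R s) = s.+1.
Proof. by rewrite size_derivn -/(rodrigues s) size_rodrigues; lia. Qed.

Lemma horner_derivn_rodrigues s m x : (m < s)%N -> x = 0 \/ x = 1 ->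
  ((rodrigues s)^`(m)).[x] = 0.
Proof.
move=> lt_ms x01.
have [r ->] : exists r, rodrigues s = ('X - x%:P) ^+ s * r.
  case: x01 => ->; first by exists (('X - 1) ^+ s); rewrite subr0.
  by exists ('X ^+ s); rewrite mulrC.
have [r' ->] := derivn_exp_XsubC_mul x r (ltnW lt_ms).
by rewrite hornerM horner_exp hornerXsubC subrr expr0n subn_eq0 leqNgt lt_ms mul0r.
Qed.

Lemma integral01_mul_derivn_rodrigues s j Q : (j <= s)%N -> (size Q <= j)%N ->
  integral01 (Q * (rodrigues s)^`(j)) = 0.
Proof.
elim: j Q => [|j IHj] Q le_js szQ.
  by move/size_poly_leq0P: szQ => ->; rewrite mul0r linear0.
rewrite derivnS mulrC integral01_by_parts !hornerM !horner_derivn_rodrigues //;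
  try by [left | right].
rewrite !mul0r subrr sub0r mulrC IHj ?oppr0 ?(ltnW le_js) // size_deriv.
by case: (size Q) szQ.
Qed.

Lemma shLeg_orthogonal s Q : (size Q <= s)%N -> integral01 (Q * shLeg R s) = 0.
Proof. exact: integral01_mul_derivn_rodrigues. Qed.

End ShiftedLegendre.

Lemma size_mul_leq_add (R : nzSemiRingType) (p q : {poly R}) m n :
  (size p <= m)%N -> (size q <= n.+1)%N -> (size (p * q)%R <= m + n)%N.
Proof. by move=> szp szq; apply: leq_trans (size_polyMleq p q) _; lia. Qed.

Section GaussLegendre.
Variables (R : realType) (s : nat) (c : 'I_s -> R).
Hypothesis c_GL : GL_nodes c.
Implicit Types P : {poly R}.

Lemma lagq_node_neq0 k : (lagq c k).[c k] != 0.
Proof.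
rewrite horner_prod; apply/prodf_neq0 => i neq_ik.
by rewrite hornerXsubC subr_eq0 (inj_eq c_GL.1) eq_sym.
Qed.

Definition GL_lagrange k : {poly R} := ((lagq c k).[c k])^-1 *: lagq c k.

Lemma horner_GL_lagrange k j : (GL_lagrange k).[c j] = (j == k)%:R.
Proof.
rewrite hornerZ; have [-> | neq_jk] := eqVneq j k; first by rewrite mulVf ?lagq_node_neq0.
by rewrite [(lagq c k).[c j]]horner_prod (bigD1 j) //= hornerXsubC subrr mul0r mulr0.
Qed.

Lemma size_GL_lagrange k : (size (GL_lagrange k) <= s)%N.
Proof.
apply: leq_trans (size_scale_leq _ _) _; apply: leq_trans (size_poly_prod_leq _ _) _.
rewrite (eq_bigr (fun=> 2%N)) => [|i _]; last by rewrite size_XsubC.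
rewrite sum_nat_const cardC1 card_ord; have := ltn_ord k; lia.
Qed.

Lemma GL_lagrange_interpolation P : (size P <= s)%N ->
  P = \sum_k P.[c k] *: GL_lagrange k.
Proof.
move=> szP; pose D := P - \sum_k P.[c k] *: GL_lagrange k.
have rootD : all (root D) (map c (enum 'I_s)).
  apply/allP => _ /mapP [j _ ->]; rewrite /root hornerD hornerN horner_sum.
  under eq_bigr do rewrite hornerZ horner_GL_lagrange eq_sym.
  by rewrite sumr_delta subrr.
have szD : (size D <= s)%N.
  apply: leq_trans (size_polyD _ _) _; rewrite size_polyN geq_max szP /=.
  elim/big_ind: _ => [|p q szp szq|k _]; first by rewrite size_poly0.
    by apply: leq_trans (size_polyD _ _) _; rewrite geq_max szp szq.
  exact: leq_trans (size_scale_leq _ _) (size_GL_lagrange k).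
apply/eqP; rewrite -subr_eq0 -/D; apply: contraTT szD => nzD; rewrite -ltnNge.
have := max_poly_roots nzD rootD.
rewrite size_map size_enum_ord map_inj_uniq ?enum_uniq; last exact: c_GL.1.
exact.
Qed.

Lemma integral01_GL_lagrange k : integral01 (GL_lagrange k) = GL_b c k.
Proof. by rewrite linearZ /= mulrC. Qed.

Lemma GL_quadrature P : (size P <= 2 * s)%N ->
  integral01 P = \sum_k GL_b c k * P.[c k].
Proof.
move=> szP; have shLeg_neq0 : shLeg R s != 0 by rewrite -size_poly_eq0 size_shLeg.
have szQ : (size (P %/ shLeg R s)%R <= s)%N.
  by rewrite size_divp // size_shLeg /= leq_subLR addnn -mul2n.
have szRm : (size (P %% shLeg R s)%R <= s)%N.
  by rewrite -ltnS -(size_shLeg R s) ltn_modp.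
rewrite {1}(divp_eq P (shLeg R s)) linearD /= shLeg_orthogonal // add0r.
rewrite {1}(GL_lagrange_interpolation szRm) linear_sum; apply: eq_bigr => k _.
have /rootP shLeg_c := c_GL.2 k.
by rewrite linearZ /= integral01_GL_lagrange {2}(divp_eq P (shLeg R s))
  hornerD hornerM shLeg_c mulr0 add0r mulrC.
Qed.

Lemma GL_b_ge0 k : 0 <= GL_b c k.
Proof.
have -> : GL_b c k = integral01 (GL_lagrange k * GL_lagrange k).
  have szL := size_GL_lagrange k.
  rewrite GL_quadrature; last by rewrite mul2n -addnn size_mul_leq_add ?(leqW szL).
  under eq_bigr do rewrite hornerM horner_GL_lagrange -natrM mulnb andbb.
  by rewrite sumr_delta.
by apply: integral01_ge0 => x; rewrite hornerM -expr2 sqr_ge0.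
Qed.

Lemma GL_aE i j : GL_a c i j = (polyint (GL_lagrange j)).[c i].
Proof. by rewrite linearZ hornerZ mulrC. Qed.

Lemma GL_symplectic i j :
  GL_b c i * GL_a c i j + GL_b c j * GL_a c j i = GL_b c i * GL_b c j.
Proof.
pose A k := polyint (GL_lagrange k).
have szA k : (size (A k) <= s.+1)%N.
  by apply: leq_trans (size_polyint _) _; rewrite ltnS size_GL_lagrange.
have <- : integral01 (GL_lagrange i * A j + A i * GL_lagrange j) = GL_b c i * GL_b c j.
  have -> : GL_lagrange i * A j + A i * GL_lagrange j = (A i * A j)^`().
    by rewrite derivM !polyint_deriv.
  rewrite integral01_deriv !hornerM !horner0_polyint mul0r subr0.
  by rewrite -!integral01_GL_lagrange.
rewrite GL_quadrature; last first.
  apply: leq_trans (size_polyD _ _) _; rewrite geq_max mul2n -addnn [A i * _]mulrC.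
  by rewrite !size_mul_leq_add ?size_GL_lagrange.
under eq_bigr do rewrite hornerD !hornerM !horner_GL_lagrange mulrDr mulrCA
  [(_ == i)%:R * _]mulrC mulrA.
by rewrite big_split /= !sumr_delta -!GL_aE.
Qed.

End GaussLegendre.

Section SymplecticSum.
Variables (R : comNzRingType) (I : finType) (a : I -> I -> R) (b : I -> R).
Hypothesis ab_symplectic : forall i j, b i * a i j + b j * a j i = b i * b j.

Lemma symplectic_double_sum (w : I -> I -> R) : (forall i j, w i j = w j i) ->
  \sum_i b i * \sum_j b j * w i j = 2 * \sum_i b i * \sum_j a i j * w i j.
Proof.
move=> w_sym; rewrite mulr2n mulrDl mul1r.
under eq_bigr do rewrite mulr_sumr.
under eq_bigr do under eq_bigr do rewrite mulrA -ab_symplectic mulrDl.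
under eq_bigr do rewrite big_split.
rewrite big_split /= [X in _ + X]exchange_big /=.
congr (_ + _); apply: eq_bigr => i _; rewrite mulr_sumr; apply: eq_bigr => j _.
  by rewrite mulrA.
by rewrite mulrA w_sym.
Qed.

End SymplecticSum.

Section QuadraticEnergy.
Variables (R : realType) (M : nat) (l : 'cV[R]_M) (S : 'M[R]_M).
Implicit Types u v y : 'cV[R]_M.

Lemma Ekin_is_linear : linear_for *%R (Ekin l).
Proof. by move=> a u v; rewrite /Ekin mulmxDr -scalemxAr !mxE. Qed.

HB.instance Definition _ :=
  GRing.isLinear.Build R 'cV[R]_M R *%R (Ekin l) Ekin_is_linear.

Definition qform u v : R := (u^T *m S *m v) 0 0.

Lemma qform_is_linear u : linear_for *%R (qform u).
Proof. by move=> a v w; rewrite /qform mulmxDr -scalemxAr !mxE. Qed.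

HB.instance Definition _ u :=
  GRing.isLinear.Build R 'cV[R]_M R *%R (qform u) (qform_is_linear u).

Hypothesis S_sym : S^T = S.

Lemma qformC u v : qform u v = qform v u.
Proof.
have tr11 (X : 'M[R]_1) : X 0 0 = X^T 0 0 by rewrite mxE.
by rewrite /qform tr11 !trmx_mul trmxK S_sym mulmxA.
Qed.

Lemma qformDl u v w : qform (u + v) w = qform u w + qform v w.
Proof. by rewrite qformC linearD /= !(qformC w). Qed.

Lemma qformZl a u v : qform (a *: u) v = a * qform u v.
Proof. by rewrite qformC linearZ /= qformC. Qed.

Lemma dEtotE y v : dEtot l S y v = Ekin l v + 2 * qform y v.
Proof.
change (dEtot l S y v) with (Ekin l v + qform v y + qform y v).
by rewrite qformC; ring.
Qed.

Lemma Etot_addr y v :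
  Etot l S (y + v) = Etot l S y + Ekin l v + 2 * qform y v + qform v v.
Proof.
have Etot_qform z : Etot l S z = Ekin l z + qform z z by [].
by rewrite !Etot_qform linearD qformDl !linearD /= (qformC v y); ring.
Qed.

Variables (I : finType) (a : I -> I -> R) (b : I -> R).
Hypothesis ab_symplectic : forall i j, b i * a i j + b j * a j i = b i * b j.

Lemma Etot_RK_step dt y0 (k Y : I -> 'cV[R]_M) :
    (forall i, Y i = y0 + dt *: \sum_j a i j *: k j) ->
  Etot l S (y0 + dt *: \sum_i b i *: k i) - Etot l S y0 =
    dt * \sum_i b i * dEtot l S (Y i) (k i).
Proof.
move=> Y_stage; set K := \sum_i b i *: k i.
pose D := \sum_i b i * \sum_j a i j * qform (k i) (k j).
have qKK : qform K K = 2 * D.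
  rewrite -(symplectic_double_sum ab_symplectic (w := fun i j => qform (k i) (k j)));
    last by move=> i j; apply: qformC.
  rewrite [in LHS]/K linear_sum; apply: eq_bigr => i _.
  rewrite linearZ /= qformC [qform (k i) _]linear_sum /=.
  by under eq_bigr do rewrite linearZ.
have dEtot_stage i : dEtot l S (Y i) (k i) =
    Ekin l (k i) + 2 * qform y0 (k i) + 2 * dt * \sum_j a i j * qform (k i) (k j).
  rewrite dEtotE Y_stage qformDl qformZl (qformC (\sum_j _)) linear_sum /=.
  by under eq_bigr do rewrite linearZ; ring.
have sum_stages : \sum_i b i * dEtot l S (Y i) (k i) =
    Ekin l K + 2 * qform y0 K + 2 * dt * D.
  rewrite /K /D !linear_sum !mulr_sumr -!big_split; apply: eq_bigr => i _.
  by rewrite dEtot_stage !linearZ /=; ring.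
by rewrite Etot_addr sum_stages !linearZ /= qformZl qKK; ring.
Qed.

End QuadraticEnergy.

Theorem proposition1 (R : realType) (M : nat)
  (F : 'cV[R]_M -> 'cV[R]_M)
  (l : 'cV[R]_M) (S : 'M[R]_M) (hS : S^T = S)
  (Ebnd Ejump : 'cV[R]_M -> R)
  (hjump : forall y, 0 <= Ejump y)
  (hlaw : forall y, dEtot l S y (F y) + Ebnd y = - Ejump y)
  (s : nat) (hs : (0 < s)%N) (c : 'I_s -> R) (hc : GL_nodes c)
  (dt : R) (hdt : 0 < dt) (K : nat) (y0 : 'cV[R]_M)
  (y : nat -> 'cV[R]_M) (Y : nat -> 'I_s -> 'cV[R]_M)
  (hy0 : y 0%N = y0)
  (hstage : forall tau, (tau < K)%N -> forall i,
      Y tau i = y tau + dt *: \sum_(j < s) GL_a c i j *: F (Y tau j))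
  (hstep : forall tau, (tau < K)%N ->
      y tau.+1 = y tau + dt *: \sum_(i < s) GL_b c i *: F (Y tau i)) :
  forall tau, (tau < K)%N ->
    Etot l S (y tau.+1) - Etot l S (y tau)
      + dt * \sum_(i < s) GL_b c i * Ebnd (Y tau i) <= 0.
Proof.
move=> tau lt_tauK.
rewrite hstep // (Etot_RK_step l hS (GL_symplectic hc) (hstage tau lt_tauK)).
rewrite -mulrDr -big_split /=.
under eq_bigr do rewrite -mulrDr hlaw.
rewrite pmulr_rle0 //; apply: sumr_le0 => i _.
by rewrite mulr_ge0_le0 ?GL_b_ge0 // oppr_le0 hjump.
Qed.
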